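(* For every $\mathbf x\in[-\alpha,1]^n$ there is a unique $\lambda\in\mathcal P(\mathbf x)$ whose support $\{\mathbf a\in D^n:\lambda(\mathbf a)>0\}$ forms a chain in $D^n$ with respect to $\preceq$ (i.e. any two elements of the support are comparable).
   Context: Fix $\alpha\in(0,1]$ and $D=\{-\alpha,0,1\}\subset\mathbb R$. Define the partial order $\preceq$ on $D$ by $0\preceq 1$, $0\preceq -\alpha$ (plus reflexivity), with $1$ and $-\alpha$ incomparable; extend it componentwise to $D^n$. For $\mathbf x\in[-\alpha,1]^n$, let $\mathcal P(\mathbf x)$ be the set of all functions $\lambda:D^n\to[0,1]$ with $\sum_{\mathbf a\in D^n}\lambda(\mathbf a)=1$ and $\sum_{\mathbf a\in D^n}\lambda(\mathbf a)\,\mathbf a=\mathbf x$ (vectors in $D^n\subset\mathbb R^n$), i.e. probability distributions on $D^n$ with mean $\mathbf x$. *)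

From HB Require Import structures.
From mathcomp Require Import all_boot all_order all_algebra.
Set Implicit Arguments. Unset Strict Implicit. Unset Printing Implicit Defensive.
Import Order.TTheory GRing.Theory Num.Theory.
Local Open Scope ring_scope.

(* The three-element set D = {-alpha, 0, 1}, as an abstract finite type. *)
Inductive D3 := DNeg | DZero | DOne.

Definition D3_to_ord (d : D3) : 'I_3 :=
  match d with DNeg => @Ordinal 3 0 isT | DZero => @Ordinal 3 1 isT | DOne => @Ordinal 3 2 isT end.
Definition ord_to_D3 (i : 'I_3) : D3 :=
  match val i with 0%N => DNeg | 1%N => DZero | _ => DOne end.
Lemma D3_to_ordK : cancel D3_to_ord ord_to_D3. Proof. by case. Qed.

HB.instance Definition _ := Finite.copy D3 (can_type D3_to_ordK).

Definition dval (R : numDomainType) (alpha : R) (d : D3) : R :=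
  match d with DNeg => - alpha | DZero => 0 | DOne => 1 end.

Definition leD (d e : D3) : bool := (d == e) || (d == DZero).

Definition leDn (n : nat) (a b : {ffun 'I_n -> D3}) : bool :=
  [forall i, leD (a i) (b i)].

Definition in_P (R : numDomainType) (alpha : R) (n : nat) (x : 'I_n -> R)
    (lam : {ffun {ffun 'I_n -> D3} -> R}) : Prop :=
  (forall a, 0 <= lam a <= 1) /\
  (\sum_a lam a = 1) /\
  (forall i : 'I_n, \sum_a lam a * dval alpha (a i) = x i).

Definition support_chain (R : numDomainType) (n : nat)
    (lam : {ffun {ffun 'I_n -> D3} -> R}) : Prop :=
  forall a b, 0 < lam a -> 0 < lam b -> leDn a b || leDn b a.

From HB Require Import structures.
From mathcomp Require Import all_boot all_order all_algebra.
From mathcomp Require Import lra.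
Import Order.TTheory GRing.Theory Num.Theory.
Local Open Scope ring_scope.
Set Implicit Arguments. Unset Strict Implicit.

(* Write s_i = 1 if x_i >= 0 and s_i = -alpha otherwise, and p_i = x_i / s_i,
   which lies in [0, 1].  A vector a is "consistent" if a_i is 0 or s_i for
   every i; consistent vectors correspond to subsets S = {i | a_i <> 0}, and
   on them the order of D^n is inclusion of these subsets.

   Existence: the threshold coupling.  Draw u uniformly in [0, 1] and put
   a_i = s_i when u < p_i; the set S is then produced with probability
   weight S = max(0, min_{i in S} p_i - max_{j notin S} p_j).  The intervals
   of thresholds producing the various S partition [0, 1] (sum_weight), which
   gives total mass 1 and the marginals, and two sets of positive weight are
   nested, so the support is a chain.

   Uniqueness: a chain-supported distribution mu with mean x only charges
   consistent vectors (supp_consistent).  For a chain-supported measure the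
   masses of up-closed events are totally ordered, so the mass of an
   intersection (union) of up-closed events is the minimum (maximum) of
   their masses (mass_all, mass_has).  Since the event "i in S" has mass p_i,
   the mass of each consistent vector is forced to equal its weight. *)

Lemma big_idx_op (T : Type) (op : SemiGroup.com_law T) z y (I : finType)
    (P : pred I) (F : I -> T) :
  \big[op/op y z]_(i | P i) F i = op y (\big[op/z]_(i | P i) F i).
Proof.
apply: (big_rec2 (fun a b => a = op y b)) => // i a b _ ->.
by rewrite !SemiGroup.opA; congr (op _ b); apply: SemiGroup.opC.
Qed.

Section ChainMass.
Variables (R : realDomainType) (T : finType) (le : rel T) (mu : T -> R).
Hypothesis mu_ge0 : forall b, 0 <= mu b.
Hypothesis mu_chain : forall a b, 0 < mu a -> 0 < mu b -> le a b || le b a.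

Definition mass (P : pred T) : R := \sum_(b | P b) mu b.

Definition upclosed (Y : pred T) : Prop := forall b c, le b c -> Y b -> Y c.

Lemma mass_le (P Q : pred T) :
  (forall b, 0 < mu b -> P b -> Q b) -> mass P <= mass Q.
Proof.
move=> PQ; rewrite /mass [X in X <= _]big_mkcond [X in _ <= X]big_mkcond /=.
apply: ler_sum => b _; have := mu_ge0 b; rewrite le_eqVlt => /orP[/eqP <-|hb].
  by case: ifP; case: ifP.
by case: ifP => Pb; [rewrite (PQ _ hb Pb) | case: ifP].
Qed.

Lemma mass_eq (P Q : pred T) :
  (forall b, 0 < mu b -> P b = Q b) -> mass P = mass Q.
Proof. by move=> PQ; apply/eqP; rewrite eq_le !mass_le // => b hb; rewrite PQ. Qed.

Lemma upclosed_nested (Y Z : pred T) : upclosed Y -> upclosed Z ->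
  (forall b, 0 < mu b -> Y b -> Z b) \/ (forall b, 0 < mu b -> Z b -> Y b).
Proof.
move=> upY upZ.
case: (boolP [exists b, [&& 0 < mu b, Y b & ~~ Z b]]) => [|/existsPn noYZ].
  case/existsP=> b /and3P[hb Yb nZb]; right=> c hc Zc.
  case/orP: (mu_chain hb hc) => [bc|cb]; first exact: upY bc Yb.
  by have := upZ _ _ cb Zc; rewrite (negbTE nZb).
by left=> b hb Yb; have := noYZ b; rewrite hb Yb /= => /negbNE.
Qed.

Lemma mass_and (Y Z : pred T) : upclosed Y -> upclosed Z ->
  mass [pred b | Y b && Z b] = Num.min (mass Y) (mass Z).
Proof.
move=> upY upZ; case: (upclosed_nested upY upZ) => sub.
  rewrite min_l; last exact: mass_le.
  by apply: mass_eq => b hb /=; case Yb: (Y b); rewrite ?(sub _ hb Yb).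
rewrite min_r; last exact: mass_le.
by apply: mass_eq => b hb /=; case Zb: (Z b); rewrite ?(sub _ hb Zb) ?andbF.
Qed.

Lemma mass_or (Y Z : pred T) : upclosed Y -> upclosed Z ->
  mass [pred b | Y b || Z b] = Num.max (mass Y) (mass Z).
Proof.
move=> upY upZ; case: (upclosed_nested upY upZ) => sub.
  rewrite max_r; last exact: mass_le.
  by apply: mass_eq => b hb /=; case Yb: (Y b); rewrite ?(sub _ hb Yb).
rewrite max_l; last exact: mass_le.
by apply: mass_eq => b hb /=; case Zb: (Z b); rewrite ?(sub _ hb Zb) ?orbT ?orbF.
Qed.

Section Families.
Variables (I : Type) (Y : I -> pred T).
Hypothesis upY : forall j, upclosed (Y j).

Lemma mass_all (r : seq I) :
  mass [pred b | all (Y^~ b) r] = \big[Num.min/mass predT]_(j <- r) mass (Y j).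
Proof.
elim: r => [|j r IH]; first by rewrite big_nil.
have up_all : upclosed [pred b | all (Y^~ b) r].
  by move=> b c bc; apply: sub_all => k; apply: upY bc.
by rewrite big_cons -IH -mass_and.
Qed.

Lemma mass_has (r : seq I) :
  mass [pred b | has (Y^~ b) r] = \big[Num.max/0]_(j <- r) mass (Y j).
Proof.
elim: r => [|j r IH]; first by rewrite big_nil /mass big_pred0.
have up_has : upclosed [pred b | has (Y^~ b) r].
  by move=> b c bc; apply: sub_has => k; apply: upY bc.
by rewrite big_cons -IH -mass_or.
Qed.

End Families.
End ChainMass.

(* The threshold coupling: for values p on a finite set A and thresholds u in
   [lo, hi], the set S of indices with p i > u.  Its weight is the length of the
   interval of thresholds that produce exactly S among the indices of A. *)
Section Threshold.
Variables (R : realFieldType) (I : finType) (p : I -> R).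

Definition weight (A : {set I}) (lo hi : R) (S : {set I}) : R :=
  Num.max 0 (\big[Num.min/hi]_(i in S) p i - \big[Num.max/lo]_(i in A :\: S) p i).

Lemma weight_out (A S : {set I}) lo hi k : k \in A -> k \notin S ->
  weight A lo hi S = weight (A :\ k) (Num.max lo (p k)) hi S.
Proof.
move=> kA kS; rewrite /weight [X in _ - X](bigD1 k) /=; last by rewrite inE kS kA.
rewrite [Num.max lo _]maxC big_idx_op; congr (Num.max 0 (_ - Num.max _ _)).
by apply: eq_bigl => i; rewrite !inE; case: (i \in S); case: (i \in A); case: (i != k).
Qed.

Lemma weight_in (A S : {set I}) lo hi k : k \notin S ->
  weight A lo hi (k |: S) = weight (A :\ k) lo (Num.min hi (p k)) S.
Proof.
move=> kS; rewrite /weight (bigD1 k) /=; last by rewrite !inE eqxx.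
rewrite [Num.min hi _]minC big_idx_op; congr (Num.max 0 (Num.min _ _ - _)).
  apply: eq_bigl => i; rewrite !inE.
  by case: (i =P k) => [->|_] /=; [rewrite (negbTE kS) | rewrite andbT].
by apply: eq_bigl => i; rewrite !inE; case: (i \in S); case: (i \in A); case: (i == k).
Qed.

Lemma sum_weight_mem (A : {set I}) lo hi k : k \in A ->
  \sum_(S : {set I} | (S \subset A) && (k \in S)) weight A lo hi S =
  \sum_(S : {set I} | S \subset A :\ k) weight (A :\ k) lo (Num.min hi (p k)) S.
Proof.
move=> kA; rewrite (reindex_onto (fun S => k |: S) (fun S => S :\ k)) /=; last first.
  by move=> S /andP[_ kS]; rewrite setD1K.
apply: eq_big => S; last first.
  by move=> /andP[_ /eqP eS]; rewrite weight_in // -eS !inE eqxx.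
rewrite setU11 andbT subUset sub1set kA /=.
apply/andP/idP => [[SA /eqP eS]|SAk].
  have kS : k \notin S by rewrite -eS !inE eqxx.
  by rewrite subsetD1 SA.
have kS : k \notin S by apply/negP => /(subsetP SAk); rewrite !inE eqxx.
by rewrite setU1K // eqxx (subset_trans SAk (subsetDl _ _)).
Qed.

Lemma sum_weight_notin (A : {set I}) lo hi k : k \in A ->
  \sum_(S : {set I} | (S \subset A) && (k \notin S)) weight A lo hi S =
  \sum_(S : {set I} | S \subset A :\ k) weight (A :\ k) (Num.max lo (p k)) hi S.
Proof.
move=> kA; apply: eq_big => S; first by rewrite subsetD1.
by move=> /andP[_ kS]; rewrite (weight_out _ _ kA kS).
Qed.

Lemma interval_length_split (lo hi c : R) :
  Num.max 0 (Num.min hi c - lo) + Num.max 0 (hi - Num.max lo c) = Num.max 0 (hi - lo).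
Proof. by case: (leP hi c); case: (leP lo c); repeat (case: leP => ?); lra. Qed.

Lemma sum_weight (A : {set I}) (lo hi : R) :
  \sum_(S : {set I} | S \subset A) weight A lo hi S = Num.max 0 (hi - lo).
Proof.
move cardA: #|A| => m; elim: m A cardA lo hi => [|m IH] A cardA lo hi.
  rewrite (cards0_eq cardA) (big_pred1 set0); last by move=> S; rewrite subset0.
  by rewrite /weight !big_pred0 // => i; rewrite !inE.
have [k kA] : exists k, k \in A by apply/set0Pn; rewrite -card_gt0 cardA.
have cardAk : #|A :\ k| = m by move: cardA; rewrite (cardsD1 k) kA => -[].
rewrite (bigID (fun S : {set I} => k \in S)) /= sum_weight_mem // sum_weight_notin //.
by rewrite !IH // interval_length_split.
Qed.

Lemma sum_weight_marginal (A : {set I}) (lo hi : R) k : k \in A ->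
  \sum_(S : {set I} | (S \subset A) && (k \in S)) weight A lo hi S
   = Num.max 0 (Num.min hi (p k) - lo).
Proof. by move=> kA; rewrite sum_weight_mem // sum_weight. Qed.

Lemma weight_pos_lt (A S : {set I}) lo hi i j :
  0 < weight A lo hi S -> i \in S -> j \in A :\: S -> p j < p i.
Proof.
rewrite /weight lt_max ltxx /= subr_gt0 => sep iS jAS.
have maxj : p j <= \big[Num.max/lo]_(k in A :\: S) p k.
  by rewrite (bigD1 j) //= le_max lexx.
have mini : \big[Num.min/hi]_(k in S) p k <= p i by rewrite (bigD1 i) //= ge_min lexx.
exact: le_lt_trans maxj (lt_le_trans sep mini).
Qed.

Lemma weight_pos_nested (A S S' : {set I}) lo hi :
  S \subset A -> S' \subset A -> 0 < weight A lo hi S -> 0 < weight A lo hi S' ->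
  (S \subset S') || (S' \subset S).
Proof.
move=> SA S'A wS wS'; apply: contraT; rewrite negb_or.
case/andP=> /subsetPn[i iS iS'] /subsetPn[j jS' jS].
have := weight_pos_lt wS iS (_ : j \in A :\: S); rewrite inE jS (subsetP S'A) //.
have := weight_pos_lt wS' jS' (_ : i \in A :\: S'); rewrite inE iS' (subsetP SA) //.
by move=> /(_ isT) lt_ij /(_ isT) /(lt_trans lt_ij); rewrite ltxx.
Qed.

End Threshold.

(* The set of coordinates where a vector of D^n is nonzero; it is monotone for
   the order of D^n, since that order only allows raising 0 to a nonzero value. *)
Definition nzset (n : nat) (a : {ffun 'I_n -> D3}) : {set 'I_n} :=
  [set i | a i != DZero].

Lemma nzset_mono n (a b : {ffun 'I_n -> D3}) : leDn a b -> nzset a \subset nzset b.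
Proof.
move/forallP=> ab; apply/subsetP => i; rewrite !inE => ai.
by case/orP: (ab i) => /eqP e; [rewrite -e | rewrite e eqxx in ai].
Qed.

Section SignPattern.
Variables (n : nat) (sgn : 'I_n -> D3).
Hypothesis sgn_nz : forall i, sgn i != DZero.

Local Notation vec := {ffun 'I_n -> D3}.

Definition consistent (a : vec) : bool := [forall i, (a i == DZero) || (a i == sgn i)].

Definition vec_of (S : {set 'I_n}) : vec := [ffun i => if i \in S then sgn i else DZero].

Lemma consistent_vec_of S : consistent (vec_of S).
Proof. by apply/forallP => i; rewrite ffunE; case: ifP; rewrite eqxx ?orbT. Qed.

Lemma nzset_vec_of S : nzset (vec_of S) = S.
Proof. by apply/setP => i; rewrite inE ffunE; case: ifP; rewrite ?sgn_nz ?eqxx. Qed.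

Lemma vec_of_nzset a : consistent a -> vec_of (nzset a) = a.
Proof.
move=> /forallP ca; apply/ffunP => i; rewrite ffunE inE.
by case/orP: (ca i) => /eqP ->; rewrite ?eqxx //= sgn_nz.
Qed.

Lemma sum_consistent (R : nmodType) (G : vec -> R) :
  \sum_(a : vec) (if consistent a then G a else 0) = \sum_(S : {set 'I_n}) G (vec_of S).
Proof.
rewrite -big_mkcond (reindex_onto vec_of (@nzset n)) /=; last exact: vec_of_nzset.
by apply: eq_bigl => S; rewrite consistent_vec_of nzset_vec_of eqxx.
Qed.

Lemma consistent_le (a b : vec) : consistent a -> consistent b ->
  nzset a \subset nzset b -> leDn a b.
Proof.
move=> ca cb /subsetP ab; rewrite -(vec_of_nzset ca) -(vec_of_nzset cb).
apply/forallP => i; rewrite /leD !ffunE.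
by case: ifPn => [/ab -> | _]; rewrite eqxx ?orbT.
Qed.

End SignPattern.

Section ChainDistribution.
Variables (R : realFieldType) (alpha : R) (n : nat) (x : 'I_n -> R).
Hypothesis alpha_gt0 : 0 < alpha.
Hypothesis x_range : forall i, - alpha <= x i <= 1.

Local Notation vec := {ffun 'I_n -> D3}.

Definition sgn i : D3 := if 0 <= x i then DOne else DNeg.
Definition sgnval i : R := dval alpha (sgn i).
Definition ratio i : R := x i / sgnval i.

Lemma sgn_nz i : sgn i != DZero.
Proof. by rewrite /sgn; case: ifP. Qed.

Lemma sgnval_neq0 i : sgnval i != 0.
Proof. by rewrite /sgnval /sgn; case: ifP => _ /=; rewrite ?oner_neq0 ?oppr_eq0 ?gt_eqF. Qed.

Lemma ratioK i : ratio i * sgnval i = x i.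
Proof. by rewrite /ratio mulfVK // sgnval_neq0. Qed.

Lemma ratio01 i : 0 <= ratio i <= 1.
Proof.
have := x_range i; rewrite /ratio /sgnval /sgn; case: ifP => x_ge0 /= /andP[x_lo x_hi].
  by rewrite divr1 x_ge0 x_hi.
have x_lt0 : x i < 0 by rewrite ltNge x_ge0.
rewrite invrN mulrN -mulNr divr_ge0 ?oppr_ge0 ?(ltW x_lt0) ?(ltW alpha_gt0) //=.
by rewrite ler_pdivrMr // mul1r lerNl.
Qed.

Definition lam : {ffun vec -> R} :=
  [ffun a => if consistent sgn a then weight ratio setT 0 1 (nzset a) else 0].

Lemma lam_ge0 a : 0 <= lam a.
Proof. by rewrite ffunE; case: ifP => _ //; rewrite le_max lexx. Qed.

Lemma lam_sum : \sum_a lam a = 1.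
Proof.
under eq_bigr do rewrite ffunE.
rewrite (sum_consistent sgn_nz).
under eq_bigr do rewrite (nzset_vec_of sgn_nz).
rewrite (eq_bigl (fun S : {set 'I_n} => S \subset setT)) => [|S]; last by rewrite subsetT.
by rewrite sum_weight subr0 max_r // ler01.
Qed.

Lemma lam_le1 a : lam a <= 1.
Proof. by rewrite -lam_sum (bigD1 a) //= lerDl sumr_ge0 // => b _; apply: lam_ge0. Qed.

Lemma lam_mean i : \sum_a lam a * dval alpha (a i) = x i.
Proof.
have lam_term a : lam a * dval alpha (a i) = if consistent sgn a
    then weight ratio setT 0 1 (nzset a) * dval alpha (a i) else 0.
  by rewrite ffunE; case: ifP; rewrite ?mul0r.
under eq_bigr do rewrite lam_term.
pose contains_i (S : {set 'I_n}) := (S \subset setT) && (i \in S).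
rewrite (sum_consistent sgn_nz) (bigID contains_i) /=.
rewrite [X in _ + X]big1 => [|S]; last first.
  by rewrite /contains_i subsetT /= => /negbTE iS; rewrite ffunE iS mulr0.
under eq_bigr => S /andP[_ iS] do rewrite (nzset_vec_of sgn_nz) ffunE iS.
rewrite addr0 -mulr_suml sum_weight_marginal ?inE // subr0.
by have /andP[r_ge0 r_le1] := ratio01 i; rewrite min_r // max_r // ratioK.
Qed.

Lemma lam_in_P : in_P alpha x lam.
Proof. by split; [move=> a; rewrite lam_ge0 lam_le1 | split; [exact: lam_sum | exact: lam_mean]]. Qed.

Lemma lam_chain : support_chain lam.
Proof.
move=> a b; rewrite !ffunE.
case ca: (consistent sgn a); last by rewrite ltxx.
case cb: (consistent sgn b); last by rewrite ltxx.
move=> wa wb; have := weight_pos_nested (subsetT _) (subsetT _) wa wb.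
by case/orP=> sub; apply/orP; [left | right]; apply: (consistent_le sgn_nz).
Qed.

Section Uniqueness.
Variable mu : {ffun vec -> R}.
Hypothesis mu_P : in_P alpha x mu.
Hypothesis mu_chain : support_chain mu.

Let mu_ge0 b : 0 <= mu b.
Proof. by case: mu_P => /(_ b) /andP[]. Qed.

(* If b is in the support and b_i <> 0, the whole support has entries 0 or b_i at
   coordinate i, so the mean x_i is a positive multiple of the value of b_i. *)
Lemma mean_sign b i : 0 < mu b -> b i != DZero -> 0 < x i * dval alpha (b i).
Proof.
move=> mu_b bi_nz; set v := dval alpha (b i).
have v2_gt0 : 0 < v * v.
  by rewrite /v; case: (b i) bi_nz => //= _; rewrite ?mulrNN ?mulr1 ?mulr_gt0.
have coord c : 0 < mu c -> (c i == DZero) || (c i == b i).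
  move=> mu_c; case/orP: (mu_chain mu_b mu_c) => /forallP /(_ i); rewrite /leD.
    by rewrite (negbTE bi_nz) orbF eq_sym => ->; rewrite orbT.
  by rewrite orbC.
have term_ge0 c : 0 <= mu c * dval alpha (c i) * v.
  have := mu_ge0 c; rewrite le_eqVlt => /orP[/eqP <-|mu_c]; first by rewrite !mul0r.
  case/orP: (coord c mu_c) => /eqP ->; first by rewrite /= mulr0 mul0r.
  by rewrite -mulrA mulr_ge0 // ltW.
case: mu_P => _ [_ /(_ i) <-]; rewrite mulr_suml (bigD1 b) //=.
apply: (@lt_le_trans _ _ (mu b * v * v)); first by rewrite -mulrA mulr_gt0.
by rewrite lerDl sumr_ge0.
Qed.

Lemma supp_consistent b : 0 < mu b -> consistent sgn b.
Proof.
move=> mu_b; apply/forallP => i; apply/negPn/negP; rewrite negb_or => /andP[bi_nz bi_sgn].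
suff : x i * dval alpha (b i) <= 0 by rewrite leNgt (mean_sign mu_b bi_nz).
move: bi_sgn; rewrite /sgn; case: ifP => x_ge0; case: (b i) bi_nz => //= _ _.
  by rewrite mulrN oppr_le0 mulr_ge0 // ltW.
by rewrite mulr1 ltW // ltNge x_ge0.
Qed.

Lemma mass_tot : mass mu predT = 1.
Proof. by case: mu_P => _ []. Qed.

Lemma coord_upclosed i : upclosed (@leDn n) (fun b => i \in nzset b).
Proof. by move=> b c bc; apply: (subsetP (nzset_mono bc)). Qed.

Lemma mass_coord i : mass mu (fun b => i \in nzset b) = ratio i.
Proof.
apply: (mulIf (sgnval_neq0 i)); rewrite ratioK.
case: mu_P => _ [_ /(_ i) <-]; rewrite /mass big_mkcond mulr_suml /=.
apply: eq_bigr => b _.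
have := mu_ge0 b; rewrite le_eqVlt => /orP[/eqP <-|mu_b]; first by case: ifP; rewrite !mul0r.
move/forallP: (supp_consistent mu_b) => /(_ i); rewrite inE.
by case/orP => /eqP ->; rewrite ?eqxx ?sgn_nz //= mulr0 mul0r.
Qed.

Lemma mass_above (S : {set 'I_n}) :
  mass mu [pred b | all (fun j => j \in nzset b) (enum S)] = \big[Num.min/1]_(i in S) ratio i.
Proof.
rewrite (mass_all mu_ge0 mu_chain coord_upclosed) mass_tot -big_enum.
by apply: eq_bigr => i _; rewrite mass_coord.
Qed.

Lemma mass_meets (T : {set 'I_n}) :
  mass mu [pred b | has (fun j => j \in nzset b) (enum T)] = \big[Num.max/0]_(i in T) ratio i.
Proof.
rewrite (mass_has mu_ge0 mu_chain coord_upclosed) -big_enum.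
by apply: eq_bigr => i _; rewrite mass_coord.
Qed.

(* A consistent vector a0 with nonzero set S is charged with the mass of
   "S is contained in the nonzero set" minus that of the strictly larger sets,
   which (when mu a0 > 0) are exactly those meeting the complement of S. *)
Lemma mu_consistent a0 : consistent sgn a0 -> mu a0 = weight ratio setT 0 1 (nzset a0).
Proof.
move=> ca0; set S := nzset a0.
pose above := [pred b | all (fun j => j \in nzset b) (enum S)].
pose escapes := [pred b | has (fun j => j \in nzset b) (enum (~: S))].
have aboveE b : above b = (S \subset nzset b).
  by apply/allP/subsetP => sub j jS; apply: sub; rewrite ?mem_enum in jS *.
have escapesE b : escapes b = ~~ (nzset b \subset S).
  apply/hasP/subsetPn => [[j]|[j jb jS]]; first by rewrite mem_enum inE => jS jb; exists j.
  by exists j => //; rewrite mem_enum inE.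
have mass_split : mass mu above = mu a0 + mass mu [pred b | above b && (b != a0)].
  have above_a0 : above a0 by rewrite aboveE.
  by rewrite /mass (bigD1 a0).
have strict_escapes : mass mu [pred b | above b && (b != a0)] <= mass mu escapes.
  apply: (mass_le mu_ge0) => b mu_b /andP[]; rewrite aboveE escapesE => Sb; apply: contraNN => bS.
  have eqS : nzset b = S by apply/eqP; rewrite eqEsubset bS Sb.
  by rewrite -(vec_of_nzset sgn_nz (supp_consistent mu_b)) -(vec_of_nzset sgn_nz ca0) eqS.
rewrite /weight setTD -mass_above -mass_meets -/above -/escapes mass_split.
have := mu_ge0 a0; rewrite le_eqVlt => /orP[/eqP mu_a0|mu_a0].
  by rewrite -mu_a0 add0r max_l // subr_le0.
suff -> : mass mu [pred b | above b && (b != a0)] = mass mu escapes.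
  by rewrite addrK max_r // ltW.
apply/eqP; rewrite eq_le strict_escapes; apply: (mass_le mu_ge0) => b mu_b.
rewrite escapesE => bS; apply/andP; rewrite aboveE.
case/orP: (mu_chain mu_a0 mu_b) => [/nzset_mono Sb | /nzset_mono bS']; last by rewrite bS' in bS.
by split=> //; apply: contraNneq bS => ->.
Qed.

Lemma lam_unique : lam = mu.
Proof.
apply/ffunP => a; rewrite ffunE.
case ca: (consistent sgn a); first by rewrite (mu_consistent ca).
have := mu_ge0 a; rewrite le_eqVlt => /orP[/eqP //|mu_a].
by rewrite (supp_consistent mu_a) in ca.
Qed.

End Uniqueness.
End ChainDistribution.

Theorem lemma1 (R : realFieldType) (alpha : R) (halpha0 : 0 < alpha)
    (halpha1 : alpha <= 1) (n : nat) (x : 'I_n -> R)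
    (hx : forall i, - alpha <= x i <= 1) :
  exists! lam : {ffun {ffun 'I_n -> D3} -> R},
    in_P alpha x lam /\ support_chain lam.
Proof.
exists (lam alpha x); split; first by split; [exact: lam_in_P | exact: lam_chain].
by move=> mu [mu_P mu_chain]; apply: lam_unique.
Qed.
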